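(* Let $n$ be a positive integer and let $p>n+1$ be a prime. (i) If $n$ is odd, then $$\sum_{\substack{0<i_1<\cdots<i_n<p\\ i_1\equiv 1,2\ (\mathrm{mod}\ 6)}}\frac{1}{i_1\cdots i_n}\equiv \sum_{\substack{0<i_1<\cdots<i_n<p\\ i_1\equiv 4,5\ (\mathrm{mod}\ 6)}}\frac{1}{i_1\cdots i_n}\pmod p.$$ (ii) If $n$ is even, then $$\sum_{\substack{0<i_1<\cdots<i_n<p\\ i_1\equiv 0\ (\mathrm{mod}\ 3)}}\frac{(-1)^{i_1}}{i_1\cdots i_n}\equiv 2\sum_{\substack{0<i_1<\cdots<i_n<p\\ i_1\equiv 2,3,4\ (\mathrm{mod}\ 6)}}\frac{1}{i_1\cdots i_n}\pmod p.$$
   Context: All sums range over integers $i_1,\dots,i_n$. The summands are rational numbers whose denominators are not divisible by $p$; for such rationals $a,b$, $a\equiv b \pmod p$ means that $a-b$ lies in $p\mathbb{Z}_{(p)}$ (equivalently, $a-b$ is divisible by $p$ in the ring $\mathbb{Z}_p$ of $p$-adic integers). *)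

From mathcomp Require Import all_boot all_order all_algebra.
Set Implicit Arguments. Unset Strict Implicit. Unset Printing Implicit Defensive.
Import Order.TTheory GRing.Theory Num.Theory.
Local Open Scope ring_scope.

(* Congruence modulo a prime p of rationals: a = b (mod p) iff a - b lies in
   p Z_(p), i.e. p divides the numerator of the reduced fraction a - b. *)
Definition ratcong (p : nat) (a b : rat) : Prop :=
  (p%:Z %| numq (a - b))%Z.

Definition incr_tuple (n p : nat) (t : n.-tuple 'I_p) : bool :=
  sorted ltn (map val t) && all (fun i : 'I_p => 0 < val i)%N t.

Definition fst_idx (n p : nat) (t : n.-tuple 'I_p) : nat := nth 0%N (map val t) 0.

Definition prod_idx (n p : nat) (t : n.-tuple 'I_p) : rat :=
  \prod_(i <- t) ((val i)%:R : rat).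

Definition mhsum (n p : nat) (P : nat -> bool) (w : nat -> rat) : rat :=
  \sum_(t : n.-tuple 'I_p | incr_tuple t && P (fst_idx t))
     w (fst_idx t) / prod_idx t.

From mathcomp Require Import all_boot all_order all_algebra.
From mathcomp Require Import fingroup finalg cyclic finfield.
From mathcomp Require Import ring zify.
Set Implicit Arguments. Unset Strict Implicit. Unset Printing Implicit Defensive.
Import Order.TTheory GRing.Theory Num.Theory FinRing.Theory.
Local Open Scope ring_scope.

(* Both parts say that sum_(0<i_1<...<i_n<p) c(i_1 mod 6) / (i_1...i_n) vanishes
   in F_p for a weight c on the residues mod 6.  In F_p the constraint that a
   set A of positive residues has n elements is detected by the power sum
   - sum_x x^(p-1-n) x^#|A|, and grouping the sets A by their least element a
   leaves differences of the products prod_(a <= j < p) (1 + x/j).  At x = t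
   these are signed binomial coefficients, because j = -(p - j) in F_p, so the
   sum becomes
   - sum_(t<p) t^(p-1-n) G(t) with G(t) = sum_b (-1)^b C(t,b) c((p-b) mod 6).
   For the two weights of the theorem, G is 6-periodic on t >= 1 and satisfies
   G(p - t) = -(-1)^n G(t), a finite check; as p-1-n and n have the same
   parity, the terms t and p - t cancel. *)


Section RationalReduction.
Variable p : nat.
Hypothesis p_pr : prime p.

Let pchar_p := pchar_Fp p_pr.

(* A relation rather than a map, so that any p-integral representation a / b of
   x can be used. *)
Definition rat_red (x : rat) (r : 'F_p) : Prop :=
  exists a b : int, [/\ (b%:~R : 'F_p) != 0, x * b%:~R = a%:~R & r * b%:~R = a%:~R].

Lemma rat_red_int (z : int) : rat_red z%:~R z%:~R.
Proof. by exists z, 1; rewrite !mulr1 oner_neq0. Qed.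

Lemma rat_red_nat (m : nat) : rat_red m%:R m%:R.
Proof. by have := rat_red_int m; rewrite !pmulrn. Qed.

Lemma rat_red0 : rat_red 0 0.
Proof. by have := rat_red_int 0; rewrite !mulr0z. Qed.

Lemma rat_red1 : rat_red 1 1.
Proof. by have := rat_red_int 1; rewrite !mulr1z. Qed.

Lemma rat_redD x y r s : rat_red x r -> rat_red y s -> rat_red (x + y) (r + s).
Proof.
move=> [a [b [b0 xb rb]]] [c [d [d0 yd sd]]].
exists (a * d + c * b), (b * d); rewrite !rmorphD !rmorphM /= mulf_neq0 //.
by split=> //; [rewrite -xb -yd | rewrite -rb -sd]; ring.
Qed.

Lemma rat_redM x y r s : rat_red x r -> rat_red y s -> rat_red (x * y) (r * s).
Proof.
move=> [a [b [b0 xb rb]]] [c [d [d0 yd sd]]].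
exists (a * c), (b * d); rewrite !rmorphM /= mulf_neq0 //.
by split=> //; [rewrite -xb -yd | rewrite -rb -sd]; ring.
Qed.

Lemma rat_redN x r : rat_red x r -> rat_red (- x) (- r).
Proof. by move=> /(rat_redM (rat_red_int (-1))); rewrite !rmorphN1 !mulN1r. Qed.

Lemma rat_redV x r : rat_red x r -> r != 0 -> rat_red x^-1 r^-1.
Proof.
move=> [a [b [b0 xb rb]]] r0.
have a0 : (a%:~R : 'F_p) != 0 by rewrite -rb mulf_neq0.
have x0 : x != 0.
  apply: contraNneq a0 => x0; move: xb; rewrite x0 mul0r => /esym/eqP.
  by rewrite intr_eq0 => /eqP ->.
by exists b, a; split; rewrite // -?xb -?rb mulKf.
Qed.

Lemma rat_red_sum (I : Type) (r : seq I) (P : pred I) F G :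
  (forall i, P i -> rat_red (F i) (G i)) ->
  rat_red (\sum_(i <- r | P i) F i) (\sum_(i <- r | P i) G i).
Proof. by apply: big_ind2 => [|x1 x2 y1 y2]; [apply: rat_red0 | apply: rat_redD]. Qed.

Lemma rat_red_prod (I : Type) (r : seq I) (P : pred I) F G :
  (forall i, P i -> rat_red (F i) (G i)) ->
  rat_red (\prod_(i <- r | P i) F i) (\prod_(i <- r | P i) G i).
Proof. by apply: big_ind2 => [|x1 x2 y1 y2]; [apply: rat_red1 | apply: rat_redM]. Qed.

Lemma rat_redX x r m : rat_red x r -> rat_red (x ^+ m) (r ^+ m).
Proof.
by move=> xr; elim: m => [|m IHm]; [apply: rat_red1 | rewrite !exprS; apply: rat_redM].
Qed.

Lemma rat_red0_dvd_numq x : rat_red x 0 -> (p%:Z %| numq x)%Z.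
Proof.
move=> [a [b [b0 xb]]]; rewrite mul0r => /esym a0.
have /(congr1 (intr : int -> 'F_p)) : numq x * b = a * denq x.
  by apply: (@intr_inj rat); rewrite !rmorphM /= numqE mulrAC xb.
rewrite !rmorphM /= a0 mul0r => /eqP; rewrite mulf_eq0 (negPf b0) orbF.
by rewrite (dvdz_pcharf pchar_p).
Qed.

End RationalReduction.


Section PowerSums.
Variable F : finFieldType.
Local Notation q := #|F|.

Lemma natr_card : q%:R = 0 :> F.
Proof. by rewrite -[_%:R]zmodXgE -cardsT expg_cardG ?inE. Qed.

Lemma expf_card_pred (x : F) : x != 0 -> x ^+ q.-1 = 1.
Proof.
move=> x0; apply: (mulIf x0).
by rewrite -exprSr prednK ?expf_card ?mul1r // ltnW ?finNzRing_gt1.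
Qed.

Lemma sum_expr_eq0 m : (0 < m < q.-1)%N -> \sum_(x : F) x ^+ m = 0.
Proof.
case/andP=> m_gt0 m_lt.
have [/existsP [c /andP [c0 cm]] | all_roots] :=
  boolP [exists c : F, (c != 0) && (c ^+ m != 1)].
  have /eqP : (c ^+ m - 1) * \sum_(x : F) x ^+ m = 0.
    rewrite mulrBl mul1r {2}(reindex_inj (mulfI c0)) /=.
    by under [X in _ - X]eq_bigr do rewrite exprMn; rewrite -mulr_sumr subrr.
  by rewrite mulf_eq0 subr_eq0 (negPf cm) => /eqP.
have Xm1_neq0 : ('X^m - 1%:P : {poly F}) != 0.
  by rewrite -size_poly_eq0 size_XnsubC.
have roots : all (root ('X^m - 1%:P)) (enum (predC1 (0 : F))).
  apply/allP => x; rewrite mem_enum inE => x0.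
  have /existsPn /(_ x) := all_roots; rewrite x0 negbK rootE !hornerE => /eqP->.
  by rewrite subrr.
have := max_poly_roots Xm1_neq0 roots (enum_uniq _).
by rewrite size_XnsubC // -cardE cardC1 ltnS leqNgt m_lt.
Qed.

Lemma sum_expr_card_pred : \sum_(x : F) x ^+ q.-1 = -1.
Proof.
rewrite (bigD1 0) //= expr0n (eq_bigr (fun _ => 1)) => [|x /expf_card_pred //].
have q_gt1 : (1 < q)%N := finNzRing_gt1 F.
rewrite sumr_const cardC1 (_ : (q.-1 == 0)%N = false); last by lia.
by apply/eqP; rewrite add0r -addr_eq0 -mulrSr prednK ?natr_card // ltnW.
Qed.

Lemma sum_expr e : (0 < e < 2 * q.-1)%N ->
  \sum_(x : F) x ^+ e = - (e == q.-1)%:R.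
Proof.
case/andP=> e_gt0 e_lt.
have [e_small | e_big] := ltnP e q.-1.
  by rewrite sum_expr_eq0 ?e_gt0 // ltn_eqF //= mulr0n oppr0.
have [e_eq | e_neq] := eqVneq e q.-1; first by rewrite e_eq; apply: sum_expr_card_pred.
rewrite /= mulr0n oppr0.
transitivity (\sum_(x : F) x ^+ (e - q.-1)); last by apply: sum_expr_eq0; lia.
apply: eq_bigr => x _; have [-> | x0] := eqVneq x 0.
  by rewrite !expr0n !gtn_eqF // subn_gt0 ltn_neqAle e_big eq_sym e_neq.
by rewrite -{1}(subnK e_big) exprD expf_card_pred // mulr1.
Qed.

End PowerSums.


Lemma prod1D_sum_subsets (R : comPzRingType) (I : finType) (D : {set I})
    (g : I -> R) :
  \prod_(i in D) (1 + g i) = \sum_(A : {set I} | A \subset D) \prod_(i in A) g i.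
Proof.
transitivity (\prod_i ((if i \in D then g i else 0) + 1)).
  by rewrite [LHS]big_mkcond; apply: eq_bigr => i _; case: ifP; rewrite ?add0r // addrC.
rewrite bigA_distr [RHS]big_mkcond; apply: eq_bigr => A _.
case: ifP => [AsubD | /negbT /subsetPn [i iA iD]].
  rewrite [RHS]big_mkcond; apply: eq_bigr => i _.
  by case: ifP => // iA; rewrite (subsetP AsubD _ iA).
by rewrite (bigD1 i) //= iA (negPf iD) mul0r.
Qed.

Section OrdinalSets.
Variable p : nat.

Definition ords_from (m : nat) : {set 'I_p} := [set i : 'I_p | (m <= i)%N].

Definition min_elt (A : {set 'I_p}) : nat := nth 0%N (map val (enum A)) 0.

Lemma sorted_enum_set (A : {set 'I_p}) : sorted ltn (map val (enum A)).
Proof.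
have -> : enum A = filter (mem A) (enum 'I_p) by rewrite enumT.
rewrite sorted_map; apply: sorted_filter; first exact: ltn_trans.
by rewrite -sorted_map val_enum_ord iota_ltn_sorted.
Qed.

Lemma enum_set_sorted (s : seq 'I_p) :
  sorted ltn (map val s) -> enum [set i in s] = s.
Proof.
move=> s_sorted; apply: (@irr_sorted_eq _ (relpre val ltn)).
- by move=> x y z; apply: ltn_trans.
- by move=> x; rewrite /= ltnn.
- by rewrite -sorted_map sorted_enum_set.
- by rewrite -sorted_map.
- by move=> i; rewrite mem_enum inE.
Qed.

Lemma all_gt0_enum (A : {set 'I_p}) :
  all (fun i : 'I_p => 0 < val i)%N (enum A) = (A \subset ords_from 1).
Proof.
apply/allP/subsetP => A_gt0 i; first by move=> iA; rewrite inE A_gt0 ?mem_enum.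
by rewrite mem_enum => /A_gt0; rewrite inE.
Qed.

Lemma min_elt_le (A : {set 'I_p}) j : j \in A -> (min_elt A <= j)%N.
Proof.
rewrite -mem_enum /min_elt; have := sorted_enum_set A.
case: (enum A) => [|i s] //= s_sorted; rewrite inE => /predU1P [-> // | js].
apply: ltnW; have /allP := order_path_min ltn_trans s_sorted.
by apply; apply: map_f.
Qed.

Lemma min_elt_mem (A : {set 'I_p}) : A != set0 -> exists2 i, i \in A & val i = min_elt A.
Proof.
rewrite -card_gt0 cardE /min_elt => /lt0n_neq0.
case E: (enum A) => [|i s] // _; exists i => //.
by rewrite -mem_enum E mem_head.
Qed.

Lemma min_elt_cond (A : {set 'I_p}) (a : 'I_p) :
  [&& 0 < a, A \subset ords_from a & a \in A]%N =
  [&& A \subset ords_from 1, A != set0 & val a == min_elt A].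
Proof.
apply/and3P/and3P => [[a_gt0 /subsetP Aa aA] | [/subsetP A1 A0 /eqP aE]].
  have [i iA iE] : exists2 i, i \in A & val i = min_elt A.
    by apply/min_elt_mem/set0Pn; exists a.
  have a_le_i : (a <= i)%N by have := Aa i iA; rewrite inE.
  split; first by apply/subsetP => j /Aa; rewrite !inE; apply: leq_trans.
    by apply/set0Pn; exists a.
  by rewrite eqn_leq min_elt_le // -iE a_le_i.
have [i iA iE] := min_elt_mem A0.
have -> : a = i by apply: val_inj; rewrite aE iE.
split=> //; first by have := A1 i iA; rewrite inE.
by apply/subsetP => j jA; rewrite inE iE min_elt_le.
Qed.

Lemma sum_by_min_elt (R : nmodType) (G : {set 'I_p} -> nat -> R) :
  \sum_(A : {set 'I_p} | (A \subset ords_from 1) && (A != set0)) G A (min_elt A) =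
  \sum_(a : 'I_p | (0 < a)%N)
     \sum_(A : {set 'I_p} | (A \subset ords_from a) && (a \in A)) G A a.
Proof.
under [RHS]eq_bigr => a _ do rewrite big_mkcond.
rewrite exchange_big [LHS]big_mkcond; apply: eq_bigr => A _ /=.
rewrite -big_mkcondr; under eq_bigl => a do rewrite min_elt_cond andbA.
have [/andP [_ A0] | _] := boolP ((A \subset ords_from 1) && (A != set0)).
  have [i iA iE] := min_elt_mem A0.
  by rewrite (big_pred1 i) ?iE // => a; rewrite /= -iE val_eqE.
by rewrite big_pred0.
Qed.

Hypothesis p_gt0 : (0 < p)%N.

Lemma sum_sorted_tuples (R : nmodType) n (P : pred (seq 'I_p)) (F : seq 'I_p -> R) :
  \sum_(t : n.-tuple 'I_p | sorted ltn (map val t) && P t) F t =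
  \sum_(A : {set 'I_p} | (#|A| == n) && P (enum A)) F (enum A).
Proof.
pose tuple_of (A : {set 'I_p}) : n.-tuple 'I_p :=
  insubd [tuple of nseq n (Ordinal p_gt0)] (enum A).
have tuple_ofE (A : {set 'I_p}) : #|A| = n -> tval (tuple_of A) = enum A.
  by move=> cardA; rewrite val_insubd -cardE cardA eqxx.
symmetry; rewrite (reindex_onto (fun t : n.-tuple _ => [set i in t]) tuple_of); last first.
  move=> A /andP [/eqP cardA _]; apply/setP => i.
  by rewrite inE -[i \in tuple_of A]/(i \in tval (tuple_of A)) tuple_ofE // mem_enum.
apply: eq_big => t; last first.
  by case/andP=> /andP [/eqP cardA _] /eqP tE; rewrite -[in RHS]tE tuple_ofE.
apply/idP/idP => [/andP [/andP [/eqP cardA Pt] /eqP tE] | /andP [t_sorted Pt]].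
  by rewrite -tE tuple_ofE // sorted_enum_set.
have enum_t := enum_set_sorted t_sorted.
have cardA : #|[set i in t]| = n by rewrite cardE enum_t size_tuple.
by rewrite cardA eqxx enum_t Pt; apply/eqP/val_inj; rewrite /= tuple_ofE.
Qed.

End OrdinalSets.

Section BinomialSums.
Variable V : zmodType.

Definition binom_sum (f : nat -> V) (t : nat) : V := \sum_(0 <= b < t.+1) f b *+ 'C(t, b).

Lemma eq_binom_sum (f g : nat -> V) : f =1 g -> binom_sum f =1 binom_sum g.
Proof. by move=> fg t; apply: eq_bigr => b _; rewrite fg. Qed.

Lemma binom_sum_widen (f : nat -> V) t m : (t < m)%N ->
  binom_sum f t = \sum_(0 <= b < m) f b *+ 'C(t, b).
Proof.
move=> t_lt; rewrite (@big_cat_nat _ _ _ t.+1 0 m) //=.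
rewrite [X in _ + X]big1_seq ?addr0 // => b /andP [_].
by rewrite mem_index_iota => /andP [t_lt_b _]; rewrite bin_small.
Qed.

Lemma binom_sumS (f : nat -> V) t :
  binom_sum f t.+1 = binom_sum f t + binom_sum (fun b => f b.+1) t.
Proof.
rewrite (binom_sum_widen f (leqnSn t.+1)) /binom_sum [LHS]big_nat_recl //.
rewrite [X in _ = X + _]big_nat_recl // !bin0 -addrA; congr (_ + _).
by rewrite -big_split; apply: eq_bigr => b _ /=; rewrite binS mulrnDr addrC.
Qed.

Lemma binom_sum_periodic (f : nat -> V) d :
  (forall b, f (b + d)%N = f b) ->
  (forall r, (r < d)%N ->
     binom_sum (fun b => f (b + r)%N) d.+1 = binom_sum (fun b => f (b + r)%N) 1) ->
  forall t, binom_sum f (t %% d)%N.+1 = binom_sum f t.+1.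
Proof.
move=> f_per f_check t; have [d0 | d_gt0] := posnP d; first by rewrite d0 modn0.
have f_mod b : f b = f (b %% d)%N.
  rewrite {1}(divn_eq b d) addnC; elim: (b %/ d)%N => [|m IHm]; first by rewrite addn0.
  by rewrite mulSnr addnA f_per.
pose g r b := f (b + r)%N.
have g_succ r : (fun b => g r b.+1) =1 g r.+1 by move=> b; rewrite /g addSnnS.
have g_period u r : binom_sum (g r) (u + d).+1 = binom_sum (g r) u.+1.
  elim: u r => [|u IHu] r.
    rewrite add0n !(eq_binom_sum (g := g (r %% d)%N)) ?f_check ?ltn_mod //;
      by move=> b; rewrite /g f_mod [in RHS]f_mod modnDmr.
  by rewrite addSn [LHS]binom_sumS [RHS]binom_sumS !(eq_binom_sum (g_succ r)) !IHu.
have f_period u : binom_sum f (u + d).+1 = binom_sum f u.+1.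
  by rewrite !(eq_binom_sum (g := g 0)) ?g_period // => b; rewrite /g addn0.
rewrite {2}(divn_eq t d) addnC; elim: (t %/ d)%N => [|m IHm]; first by rewrite addn0.
by rewrite mulSnr addnA f_period.
Qed.

End BinomialSums.

Lemma raddf_binom_sum (V W : zmodType) (h : {additive V -> W}) (f : nat -> V) t :
  h (binom_sum f t) = binom_sum (h \o f) t.
Proof. by rewrite raddf_sum; apply: eq_bigr => b _; rewrite raddfMn. Qed.

Section GeneratingProduct.
Variable p : nat.
Hypothesis p_pr : prime p.

Lemma natrFp_neq0 m : (0 < m < p)%N -> (m%:R : 'F_p) != 0.
Proof.
case/andP=> m_gt0 m_lt; rewrite -(dvdn_pcharf (pchar_Fp p_pr)).
by apply/negP => /(dvdn_leq m_gt0); rewrite leqNgt m_lt.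
Qed.

Lemma sum_Fp_nat (V : nmodType) (G : 'F_p -> V) :
  \sum_(x : 'F_p) G x = \sum_(0 <= t < p) G t%:R.
Proof.
have natr_inj : injective (fun t : 'I_p => (t%:R : 'F_p)).
  move=> s t /(congr1 val); rewrite /= !val_Fp_nat // !modn_small //.
  exact: val_inj.
rewrite big_mkord (reindex _ (onW_bij _ (inj_card_bij natr_inj _))) //.
by rewrite card_Fp // card_ord.
Qed.

Definition tail_prod (x : 'F_p) (m : nat) : 'F_p :=
  \prod_(m <= j < p) (1 + x / j%:R).

Lemma tail_prodS x m : (m < p)%N ->
  tail_prod x m = (1 + x / m%:R) * tail_prod x m.+1.
Proof. by move=> m_lt; rewrite /tail_prod big_ltn. Qed.

Lemma sum_subsets_min x (a : 'I_p) :
  \sum_(A : {set 'I_p} | (A \subset ords_from p a) && (a \in A))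
     \prod_(i in A) (x / (val i)%:R) = tail_prod x a - tail_prod x a.+1.
Proof.
have tail_prodE m : tail_prod x m = \prod_(i in ords_from p m) (1 + x / (val i)%:R).
  by rewrite /tail_prod big_geq_mkord; apply: eq_bigl => i; rewrite inE.
rewrite !tail_prodE !prod1D_sum_subsets.
rewrite (bigID (fun A : {set 'I_p} => a \in A)
                (fun A : {set 'I_p} => A \subset ords_from p a)) /=.
rewrite [X in _ + X - _](eq_bigl (fun A : {set 'I_p} => A \subset ords_from p a.+1))
  ?addrK // => A.
apply/idP/idP => [/andP [/subsetP A_a aA] | /subsetP A_a1].
  apply/subsetP => j jA; have := A_a j jA; rewrite !inE leq_eqVlt => /orP [/eqP a_j|//].
  by rewrite (val_inj a_j) jA in aA.
apply/andP; split; first by apply/subsetP => j /A_a1; rewrite !inE => /ltnW.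
by apply/negP => /A_a1; rewrite inE ltnn.
Qed.

(* Since j = - (p - j) in F_p, the product is prod_(1 <= i <= b) (1 - t / i). *)
Lemma tail_prod_rev t b : (0 < t < p)%N -> (b < p)%N ->
  tail_prod t%:R (p - b) = (-1) ^+ b * 'C(t.-1, b)%:R.
Proof.
case/andP=> t_gt0 t_lt; elim: b => [|b IHb] b_lt.
  by rewrite subn0 /tail_prod big_geq // bin0 mulr1.
rewrite tail_prodS; last by lia.
have -> : (p - b.+1).+1 = (p - b)%N by lia.
rewrite IHb; last by lia.
have b1_neq0 : (b.+1%:R : 'F_p) != 0 by rewrite natrFp_neq0 ?b_lt.
have -> : ((p - b.+1)%:R : 'F_p) = - b.+1%:R.
  by rewrite natrB ?(ltnW b_lt) // pchar_Fp_0 // sub0r.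
have binS_mul :
    b.+1%:R * 'C(t.-1, b.+1)%:R = (t%:R - b.+1%:R) * 'C(t.-1, b)%:R :> 'F_p.
  rewrite -natrM mul_bin_left natrM; have [b_le | b_gt] := leqP b t.-1.
    by rewrite natrB //; congr (_ * _); rewrite -[in RHS](prednK t_gt0) -!natr1; ring.
  by rewrite bin_small // !mulr0.
have -> : 'C(t.-1, b.+1)%:R = (t%:R - b.+1%:R) * 'C(t.-1, b)%:R / b.+1%:R :> 'F_p.
  by rewrite -binS_mul mulrC mulKf.
by rewrite exprS; field; rewrite oppr_eq0 andbb addrC natr1.
Qed.

Lemma tail_prod_diff t b : (0 < t < p)%N -> (0 < b < p)%N ->
  tail_prod t%:R (p - b) - tail_prod t%:R (p - b).+1 = (-1) ^+ b * 'C(t, b)%:R.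
Proof.
move=> t_range; case: b => // b /andP [_ b_lt].
have t_gt0 : (0 < t)%N by case/andP: t_range.
have -> : (p - b.+1).+1 = (p - b)%N by lia.
rewrite !tail_prod_rev // ?(ltnW b_lt) // -{3}(prednK t_gt0) binS natrD exprS.
ring.
Qed.

Lemma sum_tail_prod_diff (g : nat -> 'F_p) t : (0 < t < p)%N ->
  \sum_(a : 'I_p | (0 < a)%N) g a * (tail_prod t%:R a - tail_prod t%:R a.+1) =
  binom_sum (fun b => (-1) ^+ b * g (p - b)%N) t - g p.
Proof.
move=> t_range; have t_lt : (t < p)%N by case/andP: t_range.
rewrite (binom_sum_widen _ t_lt) big_ltn ?prime_gt0 //.
rewrite bin0 mulr1n expr0 mul1r subn0 addrC addKr.
rewrite big_nat_rev big_geq_mkord; apply: eq_big => // a a_gt0.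
have a_lt := ltn_ord a.
have -> : (1 + p - a.+1 = p - a)%N by lia.
have b_range : (0 < p - a < p)%N by lia.
have := tail_prod_diff t_range b_range; rewrite subKn ?(ltnW a_lt) // => ->.
by ring.
Qed.

End GeneratingProduct.

Lemma sum_reflect_eq0 (R : idomainType) m (h : nat -> R) : 2%:R != 0 :> R ->
  (forall t, (0 < t < m)%N -> h (m - t)%N = - h t) -> \sum_(1 <= t < m) h t = 0.
Proof.
move=> two_neq0 h_refl; set S := \sum_(1 <= t < m) h t.
have S_opp : S = - S.
  rewrite {1}/S big_nat_rev -sumrN; apply: eq_big_nat => t t_range.
  by rewrite add1n subSS h_refl.
have : 2%:R * S = 0 by rewrite mulr2n mulrDl mul1r {2}S_opp subrr.
by move/eqP; rewrite mulf_eq0 (negPf two_neq0) => /eqP.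
Qed.

Section IncreasingSums.
Variables p n : nat.

Definition incr_sum (g : nat -> 'F_p) : 'F_p :=
  \sum_(t : n.-tuple 'I_p | incr_tuple t)
     g (fst_idx t) / \prod_(i <- t) ((val i)%:R : 'F_p).

Lemma eq_incr_sum g h : g =1 h -> incr_sum g = incr_sum h.
Proof. by move=> gh; apply: eq_bigr => t _; rewrite gh. Qed.

Lemma incr_sumB g h : incr_sum (fun i => g i - h i) = incr_sum g - incr_sum h.
Proof. by rewrite -sumrB; apply: eq_bigr => t _; rewrite mulrBl. Qed.

Lemma incr_sumZ a g : incr_sum (fun i => a * g i) = a * incr_sum g.
Proof. by rewrite mulr_sumr; apply: eq_bigr => t _; rewrite mulrA. Qed.

Hypothesis p_pr : prime p.

Lemma rat_red_mhsum (P : nat -> bool) (w : nat -> rat) (wF : nat -> 'F_p) :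
  (forall i, rat_red (w i) (wF i)) ->
  rat_red (mhsum n p P w) (incr_sum (fun i => if P i then wF i else 0)).
Proof.
move=> w_red; rewrite /mhsum /incr_sum big_mkcondr /=.
apply: rat_red_sum => t /andP [_ t_gt0].
case: (P _); last by rewrite mul0r; apply: rat_red0.
apply: (rat_redM (w_red _)); apply: rat_redV.
  by apply: rat_red_prod => i _; apply: rat_red_nat.
rewrite prodf_seq_neq0; apply/allP => i it /=.
by rewrite natrFp_neq0 ?ltn_ord ?andbT //; apply: (allP t_gt0).
Qed.

Hypothesis n_gt0 : (0 < n)%N.
Hypothesis n_lt : (n.+1 < p)%N.

Lemma incr_sum_sets g : incr_sum g =
  \sum_(A : {set 'I_p} | (#|A| == n) && (A \subset ords_from p 1))
     g (min_elt A) * \prod_(i in A) ((val i)%:R)^-1.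
Proof.
rewrite /incr_sum /incr_tuple /fst_idx.
rewrite (sum_sorted_tuples (prime_gt0 p_pr) n
  (fun s => all (fun i : 'I_p => 0 < val i)%N s)
  (fun s => g (nth 0%N (map val s) 0) / \prod_(i <- s) ((val i)%:R : 'F_p))).
by apply: eq_big => [A | A _]; rewrite ?all_gt0_enum // big_enum prodfV.
Qed.

Lemma card_eq_power_sum (A : {set 'I_p}) : A \subset ords_from p 1 -> A != set0 ->
  (#|A| == n)%:R = - \sum_(x : 'F_p) x ^+ (p.-1 - n) * x ^+ #|A|.
Proof.
move=> A1 A0; have A_gt0 : (0 < #|A|)%N by rewrite card_gt0.
have A_lt : (#|A| < p)%N.
  suff : (#|A| < #|[set: 'I_p]|)%N by rewrite cardsT card_ord.
  apply: proper_card; rewrite properT.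
  apply: contraTneq A1 => ->; apply/subsetPn.
  by exists (Ordinal (prime_gt0 p_pr)); rewrite !inE.
under eq_bigr do rewrite -exprD.
rewrite sum_expr card_Fp // ?opprK; last by lia.
by congr (_ %:R); apply/eqP/eqP; lia.
Qed.

Lemma incr_sum_power_sums g : incr_sum g =
  - \sum_(x : 'F_p) x ^+ (p.-1 - n) *
      \sum_(A : {set 'I_p} | (A \subset ords_from p 1) && (A != set0))
         g (min_elt A) * \prod_(i in A) (x / (val i)%:R).
Proof.
rewrite incr_sum_sets.
transitivity (\sum_(A : {set 'I_p} | (A \subset ords_from p 1) && (A != set0))
  (#|A| == n)%:R * (g (min_elt A) * \prod_(i in A) ((val i)%:R)^-1)).
  rewrite [LHS]big_mkcond [RHS]big_mkcond; apply: eq_bigr => A _.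
  case: (#|A| =P n) => [cardA | _] /=; last by rewrite mul0r if_same.
  have A0 : A != set0 by rewrite -card_gt0 cardA.
  by rewrite A0 andbT mul1r.
under eq_bigr => A /andP [A1 A0] do rewrite card_eq_power_sum // mulNr mulr_suml.
rewrite sumrN exchange_big; congr (- _); apply: eq_bigr => x _.
rewrite mulr_sumr; apply: eq_bigr => A _.
by rewrite big_split prodr_const /=; ring.
Qed.

Lemma incr_sum_binom g : incr_sum g =
  - \sum_(0 <= t < p)
      t%:R ^+ (p.-1 - n) * binom_sum (fun b => (-1) ^+ b * g (p - b)%N) t.
Proof.
have k_gt0 : (0 < p.-1 - n)%N by lia.
have sum_const : \sum_(0 <= t < p) t%:R ^+ (p.-1 - n) * g p = 0 :> 'F_p.
  rewrite -mulr_suml -(sum_Fp_nat p_pr (fun x => x ^+ (p.-1 - n))) sum_expr_eq0 ?mul0r //.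
  by rewrite card_Fp //; lia.
rewrite incr_sum_power_sums (sum_Fp_nat p_pr); congr (- _).
rewrite -[RHS]subr0 -[X in _ = _ - X]sum_const -sumrB.
apply: eq_big_nat => t /andP [_ t_lt]; rewrite -mulrBr.
have [t0 | t_gt0] := posnP t; first by rewrite t0 expr0n gtn_eqF //= !mul0r.
congr (_ * _).
rewrite (sum_by_min_elt (fun A a => g a * \prod_(i in A) (t%:R / (val i)%:R))).
under eq_bigr => a _ do rewrite -mulr_sumr sum_subsets_min.
by rewrite sum_tail_prod_diff ?t_gt0.
Qed.

End IncreasingSums.

(* For q = p mod 6 and b <= p this is (-1)^b c((p - b) mod 6); the form used
   here is 6-periodic in b. *)
Definition alt_weight (c : nat -> int) (q b : nat) : int :=
  (-1) ^+ b * c ((q + 6 - b %% 6) %% 6)%N.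

Lemma alt_weight_period c q b : alt_weight c q (b + 6)%N = alt_weight c q b.
Proof.
by rewrite /alt_weight exprD (_ : (-1) ^+ 6 = 1 :> int) // mulr1 modnDr.
Qed.

Lemma binom_sum_alt_weight (R : pzRingType) c p t : (t < p)%N ->
  binom_sum (fun b => (-1) ^+ b * (c ((p - b) %% 6)%N)%:~R) t =
  (binom_sum (alt_weight c (p %% 6)) t)%:~R :> R.
Proof.
move=> t_lt; rewrite raddf_binom_sum; apply: eq_big_nat => b /andP [_ b_le].
rewrite /= rmorphM rmorphXn rmorphN1 /alt_weight.
by rewrite (_ : ((p - b) %% 6 = (p %% 6 + 6 - b %% 6) %% 6)%N) //; lia.
Qed.

(* With G := binom_sum (alt_weight c q), the first test yields G (t + 6) = G t
   for t >= 1 (binom_sum_periodic).  For q = p mod 6 and u = (t - 1) mod 6 we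
   have (q + 10 - u) mod 6 = (p - t - 1) mod 6, so the second yields
   G (p - t) = s * G t. *)
Definition alt_weight_ok (c : nat -> int) (s : int) (q : nat) : bool :=
  all (fun r => binom_sum (fun b => alt_weight c q (b + r)%N) 7
                == binom_sum (fun b => alt_weight c q (b + r)%N) 1) (iota 0 6)
  && all (fun u => binom_sum (alt_weight c q) ((q + 10 - u) %% 6)%N.+1
                   == s * binom_sum (alt_weight c q) u.+1) (iota 0 6).

Lemma alt_binom_sum_reflect c s p t :
  alt_weight_ok c s (p %% 6)%N -> (0 < t < p)%N ->
  binom_sum (alt_weight c (p %% 6)) (p - t)%N = s * binom_sum (alt_weight c (p %% 6)) t.
Proof.
case/andP=> /allP per /allP refl; case: t => // u /andP [_ u_lt].
have mod6 := binom_sum_periodic (alt_weight_period c (p %% 6)) (fun r r_lt =>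
  eqP (per r (etrans (mem_iota 0 6 r) r_lt))).
have -> : (p - u.+1 = (p - u.+2).+1)%N by lia.
rewrite -(mod6 (p - u.+2)%N) -(mod6 u).
rewrite (_ : ((p - u.+2) %% 6 = (p %% 6 + 10 - u %% 6) %% 6)%N); last by lia.
by apply/eqP/refl; rewrite mem_iota ltn_mod.
Qed.

Lemma odd_mod6 p : odd p -> (p %% 6)%N \in [:: 1; 3; 5]%N.
Proof.
rewrite -(odd_mod p (erefl : odd 6 = false)).
by case: (p %% 6)%N (ltn_mod p 6) => [|[|[|[|[|[|r]]]]]].
Qed.

Lemma incr_sum_alt_weight_eq0 p n (c : nat -> int) (s : int) :
  prime p -> (0 < n)%N -> (n.+1 < p)%N -> all (alt_weight_ok c s) [:: 1; 3; 5]%N ->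
  (-1) ^+ n.+1 = s ->
  @incr_sum p n (fun i => (c (i %% 6)%N)%:~R) = 0.
Proof.
move=> p_pr n_gt0 n_lt c_ok s_sign.
have p_odd : odd p by case/even_prime: p_pr => // p2; rewrite p2 in n_lt; lia.
have q_ok := allP c_ok _ (odd_mod6 p_odd).
set k := (p.-1 - n)%N; pose G := binom_sum (alt_weight c (p %% 6)).
have sign : (-1) ^+ k * (-1) ^+ n.+1 = -1 :> 'F_p.
  rewrite -exprD (_ : (k + n.+1 = p)%N); last by lia.
  by rewrite -signr_odd p_odd expr1.
rewrite incr_sum_binom //; apply/eqP; rewrite oppr_eq0; apply/eqP.
rewrite big_ltn ?prime_gt0 // expr0n gtn_eqF /= ?mul0r ?add0r; last by lia.
apply: sum_reflect_eq0 => [|t /andP [t_gt0 t_lt]]; first by rewrite natrFp_neq0 //; lia.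
rewrite !binom_sum_alt_weight -/G; [|lia..].
rewrite /G (alt_binom_sum_reflect q_ok) ?t_gt0 // -/G.
rewrite natrB ?(ltnW t_lt) // pchar_Fp_0 // sub0r exprNn rmorphM /= -s_sign rmorphXn rmorphN1.
transitivity ((-1) ^+ k * (-1) ^+ n.+1 * (t%:R ^+ k * (G t)%:~R) : 'F_p); first by ring.
by rewrite sign mulN1r.
Qed.

Definition weight_odd (r : nat) : int :=
  if r \in [:: 1; 2]%N then 1 else if r \in [:: 4; 5]%N then -1 else 0.

Definition weight_even (r : nat) : int :=
  if r == 0%N then 1 else if r == 3%N then -3 else if r \in [:: 2; 4]%N then -2 else 0.

Lemma weight_odd_ok : all (alt_weight_ok weight_odd 1) [:: 1; 3; 5]%N.
Proof. by rewrite /alt_weight_ok /binom_sum unlock; vm_compute. Qed.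

Lemma weight_even_ok : all (alt_weight_ok weight_even (-1)) [:: 1; 3; 5]%N.
Proof. by rewrite /alt_weight_ok /binom_sum unlock; vm_compute. Qed.

Lemma weight_oddE (R : pzRingType) i :
  (if (i %% 6 == 1)%N || (i %% 6 == 2)%N then 1 else 0)
    - (if (i %% 6 == 4)%N || (i %% 6 == 5)%N then 1 else 0)
  = (weight_odd (i %% 6))%:~R :> R.
Proof.
case: (i %% 6)%N (ltn_mod i 6) => [|[|[|[|[|[|r]]]]]] //= _.
all: by rewrite ?subrr ?subr0 ?sub0r.
Qed.

Lemma weight_evenE (R : comPzRingType) i :
  (if (i %% 3 == 0)%N then (-1) ^+ i else 0)
    - 2 * (if [|| i %% 6 == 2, i %% 6 == 3 | i %% 6 == 4]%N then 1 else 0)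
  = (weight_even (i %% 6))%:~R :> R.
Proof.
rewrite -signr_odd -(odd_mod i (erefl : odd 6 = false)).
rewrite -(modn_dvdm i (isT : (3 %| 6)%N)).
case: (i %% 6)%N (ltn_mod i 6) => [|[|[|[|[|[|r]]]]]] //= _.
all: by rewrite /weight_even /= ?NegzE ?mulrNz; ring.
Qed.

Theorem theorem1p1 (n p : nat) (hn : (0 < n)%N) (hp : prime p) (hpn : (n.+1 < p)%N) :
  (odd n ->
    ratcong p
      (mhsum n p (fun i => (i %% 6 == 1) || (i %% 6 == 2))%N (fun _ => 1))
      (mhsum n p (fun i => (i %% 6 == 4) || (i %% 6 == 5))%N (fun _ => 1)))
  /\
  (~~ odd n ->
    ratcong p
      (mhsum n p (fun i => i %% 3 == 0)%N (fun i => (-1) ^+ i))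
      (2 * mhsum n p (fun i => [|| i %% 6 == 2, i %% 6 == 3 | i %% 6 == 4])%N
                     (fun _ => 1))).
Proof.
split=> [n_odd | n_even]; apply: (rat_red0_dvd_numq hp).
- rewrite -(incr_sum_alt_weight_eq0 (c := weight_odd) (s := 1) hp hn hpn weight_odd_ok);
    last by rewrite -signr_odd /= n_odd.
  rewrite -(eq_incr_sum _ (@weight_oddE _)) incr_sumB.
  by apply: rat_redD; last apply: rat_redN; apply: rat_red_mhsum => // i; apply: rat_red1.
- rewrite -(incr_sum_alt_weight_eq0 (c := weight_even) (s := -1) hp hn hpn weight_even_ok);
    last by rewrite -signr_odd /= (negPf n_even).
  rewrite -(eq_incr_sum _ (@weight_evenE _)) incr_sumB incr_sumZ.
  apply: rat_redD; first by apply: rat_red_mhsum => // i; apply/rat_redX/rat_redN/rat_red1.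
  apply/rat_redN/rat_redM; first exact: rat_red_nat 2.
  by apply: rat_red_mhsum => // i; apply: rat_red1.
Qed.
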